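(* Let $G$ be a SIN topological group and $\Omega$ a topological group. Then the right action of $G$ on $\mathcal R(\Omega,G)$ by conjugation, $(\varphi,g)\mapsto g^{-1}\varphi g$, is uniformly continuous, where $G$ carries its uniform structure with entourages $\{(\tilde g,g):\tilde gg^{-1}\in V\}$ and $\mathcal R(\Omega,G)$ carries the uniform structure $\mathbf U_{\mathcal R}$.
   Context: SIN: the identity has a fundamental system of conjugation-invariant neighbourhoods. $\mathcal R(\Omega,G)$ is the set of continuous homomorphisms $\Omega\to G$. $\mathcal V_G$ is the set of open neighbourhoods $V$ of the identity of $G$ with $V=V^{-1}$. $\mathbf U_{\mathcal R}$ is the uniform structure on $\mathcal R(\Omega,G)$ with fundamental entourages $\mathcal O(K,V)=\{(h,\tilde h):\tilde h(c)h(c^{-1})\in V\ \forall c\in K\}$, $K\subset\Omega$ compact, $V\in\mathcal V_G$. (In the paper $\Omega=\Omega_C$ for an $X$-groupoid $C$.) *)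

From mathcomp Require Import all_boot all_algebra.
From mathcomp Require Import all_classical all_reals topology.
Set Implicit Arguments. Unset Strict Implicit. Unset Printing Implicit Defensive.
Local Open Scope classical_set_scope.

Definition is_topgroup (T : topologicalType) (mul : T -> T -> T)
  (inv : T -> T) (one : T) : Prop :=
  [/\ (forall x y z, mul x (mul y z) = mul (mul x y) z),
      (forall x, mul one x = x),
      (forall x, mul (inv x) x = one),
      continuous (fun p : T * T => mul p.1 p.2)
    & continuous inv].

Definition SIN (T : topologicalType) (mul : T -> T -> T) (inv : T -> T)
  (one : T) : Prop :=
  forall U : set T, nbhs one U ->
    exists V : set T, [/\ nbhs one V, V `<=` U &
      forall g x, V x -> V (mul (mul g x) (inv g))].

Definition sym_open_nbhd (T : topologicalType) (inv : T -> T) (one : T)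
  (V : set T) : Prop :=
  [/\ open V, V one & forall x, V x -> V (inv x)].

Definition cont_hom (O G : topologicalType) (mulO : O -> O -> O)
  (mulG : G -> G -> G) (h : O -> G) : Prop :=
  continuous h /\ forall a b, h (mulO a b) = mulG (h a) (h b).

Definition entO (O G : topologicalType) (invO : O -> O) (mulG : G -> G -> G)
  (K : set O) (V : set G) (h h' : O -> G) : Prop :=
  forall c, K c -> V (mulG (h' c) (h (invO c))).

Definition conj_act (O G : topologicalType) (mulG : G -> G -> G)
  (invG : G -> G) (h : O -> G) (g : G) : O -> G :=
  fun c => mulG (mulG (invG g) (h c)) g.

(* Put w := g' g^-1.  For arbitrary maps h, h' one has the identity
     (g'^-1 h'(c) g') (g^-1 h(c^-1) g) = (w^-1)^g (h'(c) h(c^-1))^g w^(h(c^-1) g),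
   a product of three conjugates of elements of W.  So it suffices to choose W open,
   symmetric and inside a conjugation-invariant neighbourhood N of 1 with N N N
   contained in V: continuity of multiplication gives a neighbourhood whose triple
   products lie in V, and SIN shrinks it to a conjugation-invariant one. *)

From HB Require Import structures.
From mathcomp Require Import all_boot all_algebra.
From mathcomp Require Import all_classical all_reals topology.
Set Implicit Arguments.
Unset Strict Implicit.
Local Open Scope classical_set_scope.

Section LeftGroupAxioms.
Variables (T : Type) (mul : T -> T -> T) (inv : T -> T) (one : T).
Hypotheses (mulA : associative mul) (mul1 : left_id one mul)
  (mulV : left_inverse one inv mul).

Lemma right_inverse_of_left : right_inverse one inv mul.
Proof.
move=> x; rewrite -[mul x _]mul1 -{1}(mulV (inv x)) -mulA (mulA (inv x)).
by rewrite mulV mul1.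
Qed.

Lemma right_id_of_left : right_id one mul.
Proof. by move=> x; rewrite -(mulV x) mulA right_inverse_of_left mul1. Qed.

End LeftGroupAxioms.

Local Open Scope group_scope.

Lemma conj_prod_decomp (G : groupType) (x y g g' : G) :
  g'^-1 * x * g' * (g^-1 * y * g) =
  (g' / g)^-1 ^ g * (x * y) ^ g * (g' / g) ^ (y * g).
Proof.
rewrite -[in LHS](mulgVK g g'); move: (g' / g) => w.
by rewrite conjgM -!conjMg !conjgE invgM !mulgA !mulgK.
Qed.

Section TopologicalGroup.
Variables (G : topologicalType) (mul : G -> G -> G) (inv : G -> G) (one : G).
Hypotheses (mulA : associative mul) (mul1 : left_id one mul)
  (mulV : left_inverse one inv mul)
  (mul_cont : continuous (fun p : G * G => mul p.1 p.2))
  (inv_cont : continuous inv).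

Definition topgroup_carrier : Type := G.
HB.instance Definition _ := Choice.on topgroup_carrier.
HB.instance Definition _ := isGroup.Build topgroup_carrier mulA mul1
  (right_id_of_left mulA mul1 mulV) mulV (right_inverse_of_left mulA mul1 mulV).

Lemma nbhs_one_mul2 (U : set G) : nbhs one U ->
  exists2 N, nbhs one N & forall x y, N x -> N y -> U (mul x y).
Proof.
move=> nU; have : nbhs (one, one) [set p : G * G | U (mul p.1 p.2)].
  by apply: mul_cont; rewrite /= mul1.
case=> -[A B] /= [nA nB] AB; exists (A `&` B); first exact: filterI.
by move=> x y [Ax _] [_ By]; apply: (AB (x, y)).
Qed.

Lemma nbhs_one_mul3 (U : set G) : nbhs one U ->
  exists2 N, nbhs one N & forall x y z, N x -> N y -> N z -> U (mul (mul x y) z).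
Proof.
move=> /nbhs_one_mul2[N1 nN1 N1U]; have [N2 nN2 N2N1] := nbhs_one_mul2 nN1.
exists (N1 `&` N2); first exact: filterI.
by move=> x y z [_ Nx] [_ Ny] [Nz _]; apply/N1U/Nz/N2N1.
Qed.

Lemma sym_open_nbhd_sub (U : set G) : nbhs one U ->
  exists2 W, sym_open_nbhd inv one W & W `<=` U.
Proof.
move=> nU; have invK : involutive inv := @invgK topgroup_carrier.
have inv1 : inv one = one := @invg1 topgroup_carrier.
exists (U° `&` inv @^-1` U°); last by move=> x [/nbhs_singleton].
split.
- apply: openI; first exact: open_interior.
  by move/continuousP: inv_cont; apply; exact: open_interior.
- by split; rewrite /= ?inv1.
- by move=> x [Ux Uix]; split; rewrite /= ?invK.
Qed.

Lemma conjg_stable (W : set G) :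
  (forall g x, W x -> W (mul (mul g x) (inv g))) ->
  forall x g : topgroup_carrier, W x -> W (x ^ g).
Proof. by move=> Wc x g Wx; rewrite conjgE mulgA -{2}[g]invgK; apply: Wc. Qed.

Hypothesis sin : SIN mul inv one.

Lemma conj_uniform_entourage (V : set G) : sym_open_nbhd inv one V ->
  exists2 W : set G, sym_open_nbhd inv one W &
    forall x y g g' : topgroup_carrier, W (x * y) -> W (g' / g) ->
      V (g'^-1 * x * g' * (g^-1 * y * g)).
Proof.
case=> Vo V1 _; have [N nN N3V] := nbhs_one_mul3 (open_nbhs_nbhs (conj Vo V1)).
have [W2 [nW2 W2N W2conj]] := sin nN.
have [W [Wo W1 WV] WW2] := sym_open_nbhd_sub nW2.
exists W => // x y g g' Wxy Wg; rewrite conj_prod_decomp.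
by apply: N3V; apply/W2N/(conjg_stable W2conj)/WW2 => //; apply: WV.
Qed.

End TopologicalGroup.

Theorem proposition3p4 (G O : topologicalType)
  (mulG : G -> G -> G) (invG : G -> G) (oneG : G)
  (mulO : O -> O -> O) (invO : O -> O) (oneO : O)
  (HG : is_topgroup mulG invG oneG) (HO : is_topgroup mulO invO oneO)
  (HSIN : SIN mulG invG oneG) :
  forall (K : set O) (V : set G), compact K -> sym_open_nbhd invG oneG V ->
  exists (K' : set O) (V' W : set G),
    [/\ compact K', sym_open_nbhd invG oneG V', sym_open_nbhd invG oneG W &
      forall (h h' : O -> G) (g g' : G),
        cont_hom mulO mulG h -> cont_hom mulO mulG h' ->
        entO invO mulG K' V' h h' -> W (mulG g' (invG g)) ->
        entO invO mulG K V (conj_act mulG invG h g) (conj_act mulG invG h' g')].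
Proof.
case: HG => mulA mul1 mulV mul_cont inv_cont K V cK.
move=> /(conj_uniform_entourage mulA mul1 mulV mul_cont inv_cont HSIN)[W Wsym WV].
exists K, W, W; split=> // h h' g g' _ _ hh' Wg c Kc.
exact: WV (hh' c Kc) Wg.
Qed.
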